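(* Let $\beta\in(0,1/e)$, $\Phi$ as in the context, and $\varepsilon(x)=1/\log\Phi(x)$. Then for every $x>0$, $$\sum_{k=1}^{\infty}\varepsilon\left(E^k(x)\right)=\infty.$$
   Context: $E(x)=e^x$ and $E^k$ is its $k$-th iterate. For $\beta\in(0,1/e)$ let $E_\beta(z)=e^{\beta z}$; it has a repelling real fixed point $\xi>0$ with multiplier $\lambda=\beta\xi>1$. $\Phi$ is the unique local holomorphic solution of $\Phi(E_\beta(z))=\lambda\Phi(z)$ near $\xi$ with $\Phi(\xi)=0$, $\Phi'(\xi)=1$, extended to $[\xi,\infty)$ so that the equation holds there; it is increasing and tends to $\infty$. *)

From Stdlib Require Import Reals.
From Coquelicot Require Import Coquelicot.
Open Scope R_scope.

Definition E_beta (beta z : R) : R := exp (beta * z).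

Definition eps (Phi : R -> R) (x : R) : R := / ln (Phi x).

(* Hypotheses characterising Phi, the Koenigs-type linearizer of E_beta at its
   repelling fixed point xi with multiplier lam = beta * xi:
   - Phi is real-analytic (a convergent power series) on a neighbourhood
     ]xi - r, xi + r[ of xi (restriction of the local holomorphic solution);
   - the functional equation Phi(E_beta x) = lam * Phi x holds on that
     neighbourhood and on [xi, +oo) (i.e. for all x > xi - r);
   - Phi xi = 0 and Phi'(xi) = 1. *)
Definition is_Phi (beta xi : R) (Phi : R -> R) : Prop :=
  (exists (r : R) (a : nat -> R), 0 < r /\
     (forall x, Rabs (x - xi) < r -> is_pseries a (x - xi) (Phi x)) /\
     (forall x, xi - r < x -> Phi (E_beta beta x) = (beta * xi) * Phi x)) /\
  Phi xi = 0 /\ is_derive Phi xi 1.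

From Stdlib Require Import Reals Lra Lia.
From Coquelicot Require Import Coquelicot.
Open Scope R_scope.

(* Near the repelling fixed point [xi], [Phi] is comparable to [z - xi], so on a
   fundamental domain [[a, E_beta a]] close to [xi] it lies between two positive
   constants; the functional equation then makes [Phi] comparable to [lam ^ m] on
   the m-th image of that domain, where [lam = beta * xi].  Since
   [exp y <= E_beta (E_beta y)] for large [y], the tower [E^k x] advances at most
   two steps along the [E_beta]-orbit per step, so [ln (Phi (E^k x))] grows at most
   linearly in [k] and the sum of its reciprocals diverges like the harmonic
   series. *)

Lemma ln_add_sub_le u d : 0 < u -> 0 < d -> ln (u + d) - ln u <= d / u.
Proof.
  intros Hu Hd.
  replace (u + d) with (u * (1 + d / u)) by (field; lra).
  assert (Hdu : 0 < d / u) by (apply Rdiv_lt_0_compat; lra).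
  rewrite ln_mult by lra.
  enough (ln (1 + d / u) <= d / u) by lra.
  rewrite <- (ln_exp (d / u)) at 2.
  apply ln_le; [lra | apply exp_ineq1_le].
Qed.

Lemma ln_affine_le_sum_inv A B n : 0 < A -> 0 < B ->
  ln (A + B * INR (S n)) - ln A <= B * sum_f_R0 (fun k => / (A + B * INR k)) n.
Proof.
  intros HA HB.
  assert (Hpos : forall k, 0 < A + B * INR k)
    by (intro k; pose proof (pos_INR k); nra).
  assert (Hstep : forall k,
    ln (A + B * INR (S k)) - ln (A + B * INR k) <= B * / (A + B * INR k)).
  { intro k. rewrite S_INR.
    replace (A + B * (INR k + 1)) with (A + B * INR k + B) by ring.
    apply ln_add_sub_le; auto. }
  induction n as [|n IH].
  - simpl. specialize (Hstep 0%nat). simpl in Hstep. rewrite Rmult_0_r, Rplus_0_r in *. lra.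
  - rewrite tech5, Rmult_plus_distr_l. specialize (Hstep (S n)). lra.
Qed.

Lemma is_lim_seq_sum_inv_affine A B : 0 < A -> 0 < B ->
  is_lim_seq (fun n => sum_f_R0 (fun k => / (A + B * INR k)) n) p_infty.
Proof.
  intros HA HB.
  apply (is_lim_seq_le_p_loc (fun n => ln (A + B * INR (S n)) / B - ln A / B)).
  { exists 0%nat. intros n _.
    pose proof (ln_affine_le_sum_inv A B n HA HB).
    apply (Rmult_le_reg_l B); auto. field_simplify; lra. }
  apply (is_lim_seq_plus _ _ p_infty (- (ln A / B))); [| apply is_lim_seq_const | reflexivity].
  replace p_infty with (Rbar_mult p_infty (/ B)).
  2: { apply is_Rbar_mult_unique, is_Rbar_mult_p_infty_pos. simpl. apply Rinv_0_lt_compat; lra. }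
  apply is_lim_seq_scal_r.
  apply (is_lim_comp_seq ln _ p_infty p_infty is_lim_ln_p); [now exists 0%nat|].
  apply (is_lim_seq_plus _ _ A p_infty); [apply is_lim_seq_const| |reflexivity].
  replace p_infty with (Rbar_mult B p_infty).
  2: { apply is_Rbar_mult_unique, is_Rbar_mult_sym, is_Rbar_mult_p_infty_pos. simpl; lra. }
  apply is_lim_seq_scal_l.
  apply (is_lim_seq_incr_1 INR p_infty), is_lim_seq_INR.
Qed.

Lemma is_lim_seq_sum_ge_eventually (u v : nat -> R) K :
  (forall k, (K <= k)%nat -> v k <= u k) ->
  is_lim_seq (sum_f_R0 v) p_infty -> is_lim_seq (sum_f_R0 u) p_infty.
Proof.
  intros Hvu Hv.
  set (D := sum_f_R0 u K - sum_f_R0 v K).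
  apply (is_lim_seq_le_p_loc (fun n => sum_f_R0 v n + D)).
  - exists K. intros n Hn.
    replace n with (K + (n - K))%nat by lia.
    induction (n - K)%nat as [|j IH].
    + rewrite Nat.add_0_r. unfold D. lra.
    + rewrite Nat.add_succ_r, !tech5. specialize (Hvu (S (K + j)) ltac:(lia)). lra.
  - apply (is_lim_seq_plus _ _ p_infty D); [exact Hv | apply is_lim_seq_const | reflexivity].
Qed.

Lemma exp_le_compat x y : x <= y -> exp x <= exp y.
Proof. intros [H|H]; [left; now apply exp_increasing | subst; lra]. Qed.

Lemma sq_div4_le_exp t : 0 <= t -> t * t / 4 <= exp t.
Proof.
  intro Ht.
  replace (exp t) with (exp (t / 2) * exp (t / 2)) by (rewrite <- exp_plus; f_equal; field).
  pose proof (exp_ineq1_le (t / 2)).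
  replace (t * t / 4) with ((t / 2) * (t / 2)) by field.
  apply Rmult_le_compat; lra.
Qed.

Lemma exp_le_E_beta_E_beta beta y : 0 < beta -> 4 / beta ^ 3 <= y ->
  exp y <= E_beta beta (E_beta beta y).
Proof.
  intros Hb Hy.
  assert (Hb3 : 0 < beta ^ 3) by (apply pow_lt; lra).
  assert (H4 : 4 <= beta ^ 3 * y).
  { apply (Rmult_le_compat_l (beta ^ 3)) in Hy; [|lra].
    replace (beta ^ 3 * (4 / beta ^ 3)) with 4 in Hy by (field; lra). exact Hy. }
  assert (Hy0 : 0 < y) by nra.
  unfold E_beta. apply exp_le_compat.
  pose proof (sq_div4_le_exp (beta * y) ltac:(nra)).
  replace (beta * (beta * y) * (beta * y) / 4) with (beta ^ 3 * y * y / 4) in * by (simpl; field).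
  nra.
Qed.

Lemma iter_exp_ge_add x k : x + INR k <= Nat.iter k exp x.
Proof.
  induction k as [|k IH]; [simpl; lra|].
  rewrite S_INR. simpl. pose proof (exp_ineq1_le (Nat.iter k exp x)). lra.
Qed.

Lemma iter_exp_le_add x K j : Nat.iter K exp x <= Nat.iter (K + j) exp x.
Proof.
  induction j as [|j IH]; [rewrite Nat.add_0_r; lra|].
  rewrite Nat.add_succ_r. simpl. pose proof (exp_ineq1_le (Nat.iter (K + j) exp x)). lra.
Qed.

Lemma local_bounds_of_derive_one f x0 : f x0 = 0 -> is_derive f x0 1 ->
  exists delta, 0 < delta /\
    forall z, x0 < z < x0 + delta -> (z - x0) / 2 < f z < 3 / 2 * (z - x0).
Proof.
  intros Hf0 Hd. apply is_derive_Reals in Hd.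
  destruct (Hd (1 / 2) ltac:(lra)) as [delta Hdelta].
  exists delta. split; [apply cond_pos|]. intros z Hz.
  specialize (Hdelta (z - x0) ltac:(lra)).
  rewrite Rabs_right in Hdelta by lra. specialize (Hdelta ltac:(lra)).
  replace (x0 + (z - x0)) with z in Hdelta by ring. rewrite Hf0, Rminus_0_r in Hdelta.
  apply Rabs_def2 in Hdelta.
  assert (Hfz : f z = f z / (z - x0) * (z - x0)) by (field; lra).
  split; nra.
Qed.

Section E_beta_orbits.

Variables beta xi : R.
Hypothesis Hbeta : 0 < beta.
Hypothesis Hfix : E_beta beta xi = xi.
Hypothesis Hrep : 1 < beta * xi.

Let lam := beta * xi.
Let iterE n z := Nat.iter n (E_beta beta) z.

Lemma E_beta_lt y y' : y < y' -> E_beta beta y < E_beta beta y'.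
Proof. intro H. apply exp_increasing. nra. Qed.

Lemma E_beta_le y y' : y <= y' -> E_beta beta y <= E_beta beta y'.
Proof. intro H. apply exp_le_compat. nra. Qed.

Lemma E_beta_ge_tangent y : lam * (y - xi) <= E_beta beta y - xi.
Proof.
  unfold lam. unfold E_beta in *.
  replace (beta * y) with (beta * xi + beta * (y - xi)) by ring.
  rewrite exp_plus, Hfix.
  pose proof (exp_ineq1_le (beta * (y - xi))). nra.
Qed.

Lemma iter_E_beta_le m z z' : z <= z' -> iterE m z <= iterE m z'.
Proof. intro H. induction m as [|m IH]; simpl; auto using E_beta_le. Qed.

Lemma iter_E_beta_ge_geom m z : xi < z -> lam ^ m * (z - xi) <= iterE m z - xi.
Proof.
  intro Hz. induction m as [|m IH]; simpl; [lra|].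
  pose proof (E_beta_ge_tangent (iterE m z)).
  assert (0 < lam) by (unfold lam; lra).
  fold (iterE m z). nra.
Qed.

Lemma iter_E_beta_gt m z : xi < z -> xi < iterE m z.
Proof.
  intro Hz. pose proof (iter_E_beta_ge_geom m z Hz).
  assert (0 < lam ^ m) by (apply pow_lt; unfold lam; lra). nra.
Qed.

Lemma iter_E_beta_lt_succ m z : xi < z -> iterE m z < iterE (S m) z.
Proof.
  intro Hz. pose proof (iter_E_beta_gt m z Hz).
  pose proof (E_beta_ge_tangent (iterE m z)). simpl. fold (iterE m z).
  unfold lam in *. nra.
Qed.

Lemma iter_E_beta_lt_index i j z : xi < z -> (i < j)%nat -> iterE i z < iterE j z.
Proof.
  intros Hz Hij. induction Hij as [|j Hij IH].
  - now apply iter_E_beta_lt_succ.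
  - eapply Rlt_trans; [exact IH | now apply iter_E_beta_lt_succ].
Qed.

Lemma iter_E_beta_le_index i j z : xi < z -> iterE i z <= iterE j z -> (i <= j)%nat.
Proof.
  intros Hz H. destruct (Nat.le_gt_cases i j) as [Hij|Hji]; auto.
  pose proof (iter_E_beta_lt_index j i z Hz Hji). lra.
Qed.

Lemma iter_E_beta_unbounded z y : xi < z -> exists n, y <= iterE n z.
Proof.
  intro Hz.
  destruct (proj2 (is_lim_seq_spec _ _) (is_lim_seq_geom_p lam Hrep) ((y - xi) / (z - xi)))
    as [n Hn].
  exists n. specialize (Hn n (Nat.le_refl n)).
  pose proof (iter_E_beta_ge_geom n z Hz).
  apply (Rmult_lt_compat_r (z - xi)) in Hn; [|lra].
  replace ((y - xi) / (z - xi) * (z - xi)) with (y - xi) in Hn by (field; lra).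
  lra.
Qed.

Lemma iter_E_beta_onto a y : xi < a -> a <= y ->
  exists m z, a <= z <= E_beta beta a /\ y = iterE m z.
Proof.
  intros Ha Hy.
  destruct (iter_E_beta_unbounded a y Ha) as [n Hn].
  revert y Hy Hn. induction n as [|n IH]; intros y Hy Hn.
  - exists 0%nat, y. simpl in *. pose proof (iter_E_beta_lt_succ 0 a Ha). simpl in *. lra.
  - destruct (Rle_lt_dec y (E_beta beta a)) as [Hle|Hlt].
    { exists 0%nat, y. simpl. lra. }
    assert (Hy0 : 0 < y) by (pose proof (exp_pos (beta * a)); unfold E_beta in *; lra).
    set (y' := ln y / beta).
    assert (Hy' : E_beta beta y' = y).
    { unfold E_beta, y'. replace (beta * (ln y / beta)) with (ln y) by (field; lra).
      now apply exp_ln. }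
    destruct (IH y') as [m [z [Hz Hyz]]].
    + destruct (Rle_lt_dec a y') as [|Hlt']; auto.
      pose proof (E_beta_lt _ _ Hlt'). lra.
    + destruct (Rle_lt_dec y' (iterE n a)) as [|Hlt']; auto.
      pose proof (E_beta_lt _ _ Hlt'). simpl in Hn. fold (iterE n a) in Hn. lra.
    + exists (S m), z. split; auto. simpl. fold (iterE m z). now rewrite <- Hyz.
Qed.

Lemma iter_exp_between_iter_E_beta x y0 a : xi < a ->
  exists K p, forall j,
    y0 <= Nat.iter (K + j) exp x <= iterE (p + 2 * j) a.
Proof.
  intro Ha.
  destruct (INR_unbounded (Rmax y0 (4 / beta ^ 3) - x)) as [K HK].
  assert (HTK : Rmax y0 (4 / beta ^ 3) <= Nat.iter K exp x)
    by (pose proof (iter_exp_ge_add x K); lra).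
  pose proof (Rmax_l y0 (4 / beta ^ 3)). pose proof (Rmax_r y0 (4 / beta ^ 3)).
  destruct (iter_E_beta_unbounded a (Nat.iter K exp x) Ha) as [p Hp].
  exists K, p. intro j.
  split; [pose proof (iter_exp_le_add x K j); lra|].
  induction j as [|j IH].
  - now rewrite Nat.mul_0_r, !Nat.add_0_r.
  - rewrite Nat.add_succ_r. replace (p + 2 * S j)%nat with (S (S (p + 2 * j))) by lia.
    simpl. fold (iterE (p + 2 * j) a).
    pose proof (iter_exp_le_add x K j).
    eapply Rle_trans; [apply (exp_le_E_beta_E_beta beta); lra|].
    now apply E_beta_le, E_beta_le.
Qed.

Lemma E_beta_fundamental_domain_near delta : 0 < delta ->
  exists a, xi < a /\ E_beta beta a < xi + delta.
Proof.
  intro Hdelta.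
  assert (Hxi : 0 < xi) by nra.
  assert (Hdx : 0 < delta / xi) by (apply Rdiv_lt_0_compat; lra).
  assert (Hl : 0 < ln (1 + delta / xi)) by (rewrite <- ln_1; apply ln_increasing; lra).
  set (h := ln (1 + delta / xi) / (2 * beta)).
  assert (Hh : 0 < h) by (apply Rdiv_lt_0_compat; lra).
  exists (xi + h). split; [lra|].
  unfold E_beta in *.
  replace (beta * (xi + h)) with (beta * xi + ln (1 + delta / xi) / 2) by (unfold h; field; lra).
  rewrite exp_plus, Hfix.
  assert (exp (ln (1 + delta / xi) / 2) < 1 + delta / xi).
  { rewrite <- (exp_ln (1 + delta / xi)) at 2 by lra. apply exp_increasing. lra. }
  replace (xi + delta) with (xi * (1 + delta / xi)) by (field; lra).
  nra.
Qed.

Section Linearizer.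

Variable Phi : R -> R.
Hypothesis HPhi_E : forall z, xi < z -> Phi (E_beta beta z) = lam * Phi z.

Lemma Phi_iter_E_beta m z : xi < z -> Phi (iterE m z) = lam ^ m * Phi z.
Proof.
  intro Hz. induction m as [|m IH]; simpl; [ring|].
  fold (iterE m z). rewrite HPhi_E by now apply iter_E_beta_gt.
  rewrite IH. ring.
Qed.

Lemma ln_Phi_between_iter_E_beta a c M N n y : xi < a ->
  (forall z, a <= z <= E_beta beta a -> c < Phi z < M) ->
  1 < lam ^ N * c ->
  iterE (S N) a <= y <= iterE n a ->
  0 < ln (Phi y) <= ln M + INR n * ln lam.
Proof.
  intros Ha Hdom HN Hy.
  assert (Hlam : 1 < lam) by exact Hrep.
  assert (Hay : a <= y) by (pose proof (iter_E_beta_lt_index 0 (S N) a Ha ltac:(lia)); simpl in *; lra).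
  destruct (iter_E_beta_onto a y Ha Hay) as [m [z [Hz ->]]].
  assert (Hm : iterE m a <= iterE m z <= iterE (S m) a).
  { split; [now apply iter_E_beta_le|].
    unfold iterE. rewrite Nat.iter_succ_r. now apply iter_E_beta_le. }
  assert (HmN : (N <= m)%nat).
  { enough (S N <= S m)%nat by lia. apply (iter_E_beta_le_index _ _ a Ha). lra. }
  assert (Hmn : (m <= n)%nat) by (apply (iter_E_beta_le_index _ _ a Ha); lra).
  destruct (Hdom z Hz) as [Hcz HzM].
  rewrite Phi_iter_E_beta by lra.
  assert (HlamN : 0 < lam ^ N) by (apply pow_lt; lra).
  assert (HlamNm : lam ^ N <= lam ^ m) by (apply Rle_pow; [lra|lia]).
  assert (Hlamm : lam ^ m <= lam ^ n) by (apply Rle_pow; [lra|lia]).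
  assert (Hc : 0 < c) by nra.
  split.
  - rewrite <- ln_1. apply ln_increasing; [lra|nra].
  - rewrite <- ln_pow, <- ln_mult by lra. apply ln_le; nra.
Qed.

End Linearizer.

End E_beta_orbits.

Theorem lemma4p7 (beta xi : R) (Phi : R -> R)
  (Hbeta : 0 < beta < / exp 1)
  (Hxi_pos : 0 < xi) (Hxi_fix : E_beta beta xi = xi) (Hxi_rep : 1 < beta * xi)
  (HPhi : is_Phi beta xi Phi) :
  forall x : R, 0 < x ->
    is_lim_seq
      (fun n : nat => sum_f_R0 (fun k : nat => eps Phi (Nat.iter (S k) exp x)) n)
      p_infty.
Proof.
  intros x _.
  destruct HPhi as [[r [_ [Hr [_ HFE]]]] [HPhi0 HPhi']].
  destruct Hbeta as [Hb _].
  assert (HPhi_E : forall z, xi < z -> Phi (E_beta beta z) = beta * xi * Phi z)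
    by (intros; apply HFE; lra).
  destruct (local_bounds_of_derive_one Phi xi HPhi0 HPhi') as [delta [Hdelta Hnear]].
  destruct (E_beta_fundamental_domain_near beta xi Hb Hxi_fix Hxi_rep delta Hdelta)
    as [a [Ha HEa]].
  assert (Hdom : forall z, a <= z <= E_beta beta a -> (a - xi) / 2 < Phi z < 3 / 2 * delta).
  { intros z Hz. destruct (Hnear z) as [Hlo Hhi]; lra. }
  destruct (proj2 (is_lim_seq_spec _ _) (is_lim_seq_geom_p _ Hxi_rep) (2 / (a - xi)))
    as [N HN].
  assert (Hc : 1 < (beta * xi) ^ N * ((a - xi) / 2)).
  { specialize (HN N (Nat.le_refl N)).
    apply (Rmult_lt_compat_r ((a - xi) / 2)) in HN; [|lra].
    replace (2 / (a - xi) * ((a - xi) / 2)) with 1 in HN by (field; lra). lra. }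
  destruct (iter_exp_between_iter_E_beta beta xi Hb Hxi_fix Hxi_rep x
              (Nat.iter (S N) (E_beta beta) a) a Ha) as [K [p Hwin]].
  set (L := ln (beta * xi)).
  set (A := ln (3 / 2 * delta) + INR p * L).
  assert (Hln : forall j, 0 < ln (Phi (Nat.iter (K + j) exp x)) <= A + 2 * L * INR j).
  { intro j.
    pose proof (ln_Phi_between_iter_E_beta beta xi Hb Hxi_fix Hxi_rep Phi HPhi_E
                  a _ _ N (p + 2 * j) _ Ha Hdom Hc (Hwin j)) as Hj.
    rewrite plus_INR, mult_INR in Hj. simpl (INR 2) in Hj. unfold A, L. lra. }
  assert (HA : 0 < A) by (pose proof (Hln 0%nat); simpl in *; lra).
  assert (HL : 0 < L) by (unfold L; rewrite <- ln_1; apply ln_increasing; lra).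
  apply (is_lim_seq_sum_ge_eventually _ (fun k => / ((A + 2 * L) + 2 * L * INR k)) K).
  - intros k Hk. replace (S k) with (K + (S k - K))%nat by lia.
    destruct (Hln (S k - K)%nat) as [Hpos Hle].
    assert (INR (S k - K) <= INR k + 1) by (rewrite <- S_INR; apply le_INR; lia).
    unfold eps. apply Rinv_le_contravar; nra.
  - apply is_lim_seq_sum_inv_affine; lra.
Qed.
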